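(* Let $P$ and $Q$ be upper primes. Then $PQ-QP$ lies in the two-sided ideal of $\mathcal{A}$ generated by $\{U(LR)-(LR)U : U \text{ an upper prime}\}$.
   Context: $\mathcal{A}$ is the free associative $\mathbb{C}$-algebra on noncommuting generators $L,R$; words are finite products of these letters. A word is balanced if it contains equally many $L$'s and $R$'s. A word is prime if it is nonempty, balanced, and not a product of two nonempty balanced words. For a balanced word $W=a_1\cdots a_n$, $e_k(W)=\sum_{i=1}^k\overline{a_i}$ with $\overline{R}=1$, $\overline{L}=-1$. A prime $P$ of length $n$ is an upper prime if $e_k(P)>0$ for all $1\le k\le n-1$. *)

From HB Require Import structures.
From mathcomp Require Import all_boot all_algebra.
From mathcomp Require Import Rstruct.
From mathcomp.real_closed Require Import complex.
From mathcomp.multinomials Require Import monalg.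

Set Implicit Arguments.
Unset Strict Implicit.
Unset Printing Implicit Defensive.

Import GRing.Theory Num.Theory.
Local Open Scope ring_scope.

Definition CC : comUnitRingType := complex Rdefinitions.R.

Inductive letter := Lt | Rt.

Definition letter_to_bool (a : letter) : bool := if a is Rt then true else false.
Definition bool_to_letter (b : bool) : letter := if b then Rt else Lt.
Lemma letter_boolK : cancel letter_to_bool bool_to_letter.
Proof. by case. Qed.
HB.instance Definition _ := Equality.copy letter (can_type letter_boolK).
HB.instance Definition _ := Choice.copy letter (can_type letter_boolK).

Definition word := seq letter.

(* The free associative C-algebra on L, R. *)
Definition FA := {malg CC[fmonom letter]}.

Definition wrd (w : word) : FA := << FMonom w >>.

Definition nR (w : word) : nat := count (pred1 Rt) w.
Definition nL (w : word) : nat := count (pred1 Lt) w.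

Definition balanced (w : word) : Prop := nR w = nL w.

Definition prime_word (w : word) : Prop :=
  w <> [::] /\ balanced w /\
  ~ (exists u v : word, u <> [::] /\ v <> [::] /\ balanced u /\ balanced v
                        /\ w = u ++ v).

Definition ek (k : nat) (w : word) : int :=
  (nR (take k w))%:Z - (nL (take k w))%:Z.

Definition upper_prime (P : word) : Prop :=
  prime_word P /\ forall k : nat, (1 <= k <= (size P).-1)%N -> 0 < ek k P.

Definition in_twosided_ideal (A : nzRingType) (S : A -> Prop) (x : A) : Prop :=
  exists (n : nat) (a b s : 'I_n -> A),
    (forall i, S (s i)) /\ x = \sum_(i < n) a i * s i * b i.

Definition gen_set (x : FA) : Prop :=
  exists U : word, upper_prime U /\
    x = wrd U * wrd [:: Lt; Rt] - wrd [:: Lt; Rt] * wrd U.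

From HB Require Import structures.
From mathcomp Require Import all_boot all_algebra.
From mathcomp.multinomials Require Import monalg.
From mathcomp Require Import zify.

Set Implicit Arguments.
Unset Strict Implicit.
Unset Printing Implicit Defensive.

Import GRing.Theory.
Local Open Scope ring_scope.

(* Upper primes are exactly the words R u L with u a Dyck word (nonnegative
   prefix heights, total height 0), and Dyck words are generated by
   u, v |-> (R u L) v.  Work modulo the ideal I.  Since every Dyck word is a
   product of upper primes, Dyck words commute with LR modulo I.  Then
   (R u L)(R v L) = R (u LR v) L, and u LR v = LR u v = LR v u = v LR u modulo I
   as soon as u and v commute modulo I; a nested induction on the Dyck
   decomposition shows that any two Dyck words commute modulo I. *)

Section TwoSidedIdeal.
Variables (A : nzRingType) (S : A -> Prop).

Lemma in_twosided_ideal0 : in_twosided_ideal S 0.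
Proof.
exists 0%N, (fun _ => 0), (fun _ => 0), (fun _ => 0).
by split=> [[]|]; last rewrite big_ord0.
Qed.

Lemma in_twosided_ideal_gen s : S s -> in_twosided_ideal S s.
Proof.
move=> Ss; exists 1%N, (fun _ => 1), (fun _ => 1), (fun _ => s).
by split=> //; rewrite big_ord1 mul1r mulr1.
Qed.

Lemma in_twosided_idealD x y :
  in_twosided_ideal S x -> in_twosided_ideal S y -> in_twosided_ideal S (x + y).
Proof.
move=> [n [a [b [s [Ss ->]]]]] [m [a' [b' [s' [Ss' ->]]]]].
pose glue (f f' : _ -> A) (i : 'I_(n + m)) :=
  match split i with inl j => f j | inr j => f' j end.
exists (n + m)%N, (glue a a'), (glue b b'), (glue s s'); split.
  by move=> i; rewrite /glue; case: (split i).
rewrite big_split_ord /glue; congr (_ + _); apply: eq_bigr => i _.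
  by rewrite (unsplitK (inl _ i)).
by rewrite (unsplitK (inr _ i)).
Qed.

Lemma in_twosided_idealMlr a x b :
  in_twosided_ideal S x -> in_twosided_ideal S (a * x * b).
Proof.
move=> [n [a' [b' [s [Ss ->]]]]].
exists n, (fun i => a * a' i), (fun i => b' i * b), s; split=> //.
by rewrite mulr_sumr mulr_suml; apply: eq_bigr => i _; rewrite !mulrA.
Qed.

Definition congr_mod (x y : A) : Prop := in_twosided_ideal S (x - y).

Definition commute_mod (x y : A) : Prop := congr_mod (x * y) (y * x).

Lemma congr_mod_refl x : congr_mod x x.
Proof. by rewrite /congr_mod subrr; apply: in_twosided_ideal0. Qed.

Lemma congr_mod_sym x y : congr_mod x y -> congr_mod y x.
Proof.
by move=> /(in_twosided_idealMlr (-1) 1); rewrite mulr1 mulN1r opprB.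
Qed.

Lemma congr_mod_trans y x z : congr_mod x y -> congr_mod y z -> congr_mod x z.
Proof.
by move=> xy yz; have := in_twosided_idealD xy yz; rewrite addrA subrK.
Qed.

Lemma congr_modM x x' y y' :
  congr_mod x x' -> congr_mod y y' -> congr_mod (x * y) (x' * y').
Proof.
move=> /(in_twosided_idealMlr 1 y) xx' /(in_twosided_idealMlr x' 1) yy'.
have := in_twosided_idealD xx' yy'.
by rewrite mul1r mulr1 mulrBl mulrBr addrA subrK.
Qed.

Lemma commute_mod_sym x y : commute_mod x y -> commute_mod y x.
Proof. exact: congr_mod_sym. Qed.

Lemma commute_mod1l x : commute_mod 1 x.
Proof. by rewrite /commute_mod mul1r mulr1; apply: congr_mod_refl. Qed.

Lemma commute_modMl x y z :
  commute_mod x z -> commute_mod y z -> commute_mod (x * y) z.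
Proof.
move=> xz yz; apply: (congr_mod_trans (y := x * z * y)).
  by rewrite -!mulrA; apply: congr_modM (congr_mod_refl x) yz.
by rewrite mulrA; apply: congr_modM xz (congr_mod_refl y).
Qed.

Lemma commute_modMr x y z :
  commute_mod z x -> commute_mod z y -> commute_mod z (x * y).
Proof.
move=> /commute_mod_sym zx /commute_mod_sym zy.
by apply/commute_mod_sym/commute_modMl.
Qed.

Lemma congr_mod_mul3_rev x y z :
  commute_mod x z -> commute_mod y z -> commute_mod x y ->
  congr_mod (x * z * y) (y * z * x).
Proof.
move=> xz yz xy; apply: (congr_mod_trans (y := z * x * y)).
  exact: congr_modM xz (congr_mod_refl y).
apply: (congr_mod_trans (y := z * y * x)).
  by rewrite -!mulrA; apply: congr_modM (congr_mod_refl z) xy.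
exact: congr_modM (commute_mod_sym yz) (congr_mod_refl x).
Qed.

End TwoSidedIdeal.

Definition height (w : word) : int := (nR w)%:Z - (nL w)%:Z.

Lemma ekE k w : ek k w = height (take k w).
Proof. by []. Qed.

Lemma balancedP w : balanced w <-> height w = 0.
Proof. by rewrite /balanced /height; split; lia. Qed.

Lemma height_nil : height [::] = 0.
Proof. by []. Qed.

Lemma height_Rt w : height (Rt :: w) = height w + 1.
Proof. by rewrite /height /nR /nL /=; lia. Qed.

Lemma height_Lt w : height (Lt :: w) = height w - 1.
Proof. by rewrite /height /nR /nL /=; lia. Qed.

Lemma height_cat u v : height (u ++ v) = height u + height v.
Proof. by rewrite /height /nR /nL !count_cat; lia. Qed.

Fixpoint dyck_from (n : nat) (w : word) : bool :=
  match w with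
  | [::] => n == 0%N
  | Rt :: w' => dyck_from n.+1 w'
  | Lt :: w' => (0 < n)%N && dyck_from n.-1 w'
  end.

Lemma dyck_fromP n w :
  dyck_from n w <->
  (forall k, 0 <= n%:Z + height (take k w)) /\ n%:Z + height w = 0.
Proof.
elim: w n => [|[] w IHw] n /=.
- split=> [/eqP -> //|[_ /eqP]]; by rewrite addr0.
- case: n => [|n] /=.
  + split=> // -[nonneg _]; have := nonneg 1%N.
    by rewrite /= take0 height_Lt height_nil; lia.
  + rewrite IHw height_Lt; split=> -[nonneg ret]; split; try lia.
    * case=> [|k] /=; first by rewrite addr0.
      by have := nonneg k; rewrite height_Lt; lia.
    * by move=> k; have := nonneg k.+1; rewrite /= height_Lt; lia.
- rewrite IHw height_Rt; split=> -[nonneg ret]; split; try lia.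
  + case=> [|k] /=; first by rewrite addr0.
    by have := nonneg k; rewrite height_Rt; lia.
  + by move=> k; have := nonneg k.+1; rewrite /= height_Rt; lia.
Qed.

Lemma dyck_from_cat m n u v :
  dyck_from m u -> dyck_from n v -> dyck_from (m + n) (u ++ v).
Proof.
elim: u m => [|[] u IHu] m /=; first by move/eqP ->.
- by case: m => [|m] //= du dv; apply: IHu.
- by move=> du dv; rewrite -addSn; apply: IHu.
Qed.

Lemma dyck_from_split n w :
  dyck_from n.+1 w ->
  exists u v, [/\ w = u ++ Lt :: v, dyck_from 0 u & dyck_from n v].
Proof.
have [N] := ubnP (size w); elim: N w n => // N IHN [|[] w] n //= ltwN.
- by move=> dw; exists [::], w.
- move=> /IHN[//|u [v [Ew du /IHN[|u' [v' [Ev du' dv']]]]]].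
    by move: ltwN; rewrite Ew size_cat /=; lia.
  exists (Rt :: u ++ Lt :: u'), v'; split=> //=; first by rewrite Ew Ev -catA.
  exact: (dyck_from_cat (n := 1) (v := Lt :: u') du du').
Qed.

Definition enclose (u : word) : word := Rt :: u ++ [:: Lt].

Lemma size_enclose u : size (enclose u) = (size u).+2.
Proof. by rewrite /= size_cat addn1. Qed.

Lemma height_enclose u : height (enclose u) = height u.
Proof. by rewrite height_Rt height_cat height_Lt height_nil; lia. Qed.

Lemma take_enclose k u :
  (k <= size u)%N -> take k.+1 (enclose u) = Rt :: take k u.
Proof. by move=> le_ku; rewrite /= takel_cat. Qed.

Inductive dyck : word -> Prop :=
| dyck_nil : dyck [::]
| dyck_cons u v : dyck u -> dyck v -> dyck (enclose u ++ v).

Lemma dyck_enclose u : dyck u -> dyck (enclose u).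
Proof.
by move=> du; rewrite -[enclose u]cats0; apply: dyck_cons du dyck_nil.
Qed.

Lemma dyck_from0 w : dyck w <-> dyck_from 0 w.
Proof.
split.
  elim=> // u v _ du _ dv; rewrite /enclose /= -catA /=.
  exact: (dyck_from_cat (n := 1) (v := Lt :: v) du dv).
have [N] := ubnP (size w); elim: N w => // N IHN [|[] w] //= ltwN.
  by move=> _; apply: dyck_nil.
move=> /dyck_from_split[u [v [Ew du dv]]].
have -> : Rt :: w = enclose u ++ v by rewrite Ew /enclose /= -catA.
by apply: dyck_cons; apply: IHN => //; move: ltwN; rewrite Ew size_cat /=; lia.
Qed.

Lemma dyckP w :
  dyck w <-> (forall k, 0 <= height (take k w)) /\ height w = 0.
Proof.
rewrite dyck_from0 dyck_fromP add0r.
by split=> -[nonneg ret]; split=> // k; have := nonneg k; rewrite add0r.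
Qed.

Lemma upper_prime_of_ek P :
  P <> [::] -> balanced P ->
  (forall k, (1 <= k <= (size P).-1)%N -> 0 < ek k P) -> upper_prime P.
Proof.
move=> P0 bP ek_gt0; do 3!split=> //.
case=> u [v [/eqP u0 [/eqP v0 [/balancedP bu [_ Puv]]]]].
have su : (0 < size u)%N by rewrite lt0n size_eq0.
have sv : (0 < size v)%N by rewrite lt0n size_eq0.
have /ek_gt0 : (1 <= size u <= (size P).-1)%N by rewrite Puv size_cat; lia.
by rewrite ekE Puv take_size_cat // bu.
Qed.

Lemma upper_primeP P : upper_prime P <-> exists2 u, dyck u & P = enclose u.
Proof.
split=> [|[u /dyckP[nonneg ret] ->]]; last first.
  apply: upper_prime_of_ek => //; first by rewrite balancedP height_enclose.
  case=> [//|k]; rewrite size_enclose /= => le_ku.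
  by rewrite ekE take_enclose // height_Rt; have := nonneg k; lia.
case=> -[P0 [/balancedP hP _]] ek_gt0.
case: P P0 hP ek_gt0 => [//|x P'] _; case/lastP: P' => [|u y]; first by case: x.
rewrite -cats1 => hP ek_gt0.
have ex : x = Rt.
  have /ek_gt0 : (1 <= 1 <= (size (x :: u ++ [:: y])).-1)%N.
    by rewrite /= size_cat addn1.
  by case: x {hP ek_gt0} => //; rewrite ekE /= take0 height_Lt height_nil.
subst x; have ey : y = Lt.
  have /ek_gt0 : (1 <= (size u).+1 <= (size (Rt :: u ++ [:: y])).-1)%N.
    by rewrite /= size_cat addn1.
  rewrite ekE /= take_size_cat //.
  case: y {ek_gt0} hP => //.
  by rewrite !(height_cat, height_Rt, height_nil); lia.
subst y; exists u => //.
apply/dyckP; split; last by rewrite -height_enclose.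
move=> k; case: (leqP k (size u)) => [le_ku | /ltnW/take_oversize ->].
  have /ek_gt0 : (1 <= k.+1 <= (size (enclose u)).-1)%N.
    by rewrite size_enclose ltnS.
  by rewrite ekE take_enclose // height_Rt; lia.
by rewrite -height_enclose hP.
Qed.

Lemma wrd_nil : wrd [::] = 1.
Proof. by rewrite /wrd; congr << _ >>; apply: val_inj; rewrite /= fm1. Qed.

Lemma wrd_cat u v : wrd (u ++ v) = wrd u * wrd v.
Proof.
rewrite /wrd malgM_def fgmulUU mulr1; congr << _ >>.
by apply: val_inj; rewrite /= fmM.
Qed.

Section DyckCommutation.
Variables (A : nzRingType) (S : A -> Prop) (w : word -> A).
Hypothesis w_nil : w [::] = 1.
Hypothesis w_cat : forall u v, w (u ++ v) = w u * w v.
Hypothesis S_comm_LR :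
  forall U, upper_prime U -> S (w U * w [:: Lt; Rt] - w [:: Lt; Rt] * w U).

Local Notation LR := (w [:: Lt; Rt]).

Lemma w_enclose u : w (enclose u) = w [:: Rt] * w u * w [:: Lt].
Proof. by rewrite /enclose -cat1s !w_cat mulrA. Qed.

Lemma dyck_commute_LR x : dyck x -> commute_mod S (w x) LR.
Proof.
elim=> [|u v du _ _ IHv]; first by rewrite w_nil; apply: commute_mod1l.
rewrite w_cat; apply: commute_modMl IHv; apply: in_twosided_ideal_gen.
by apply: S_comm_LR; apply/upper_primeP; exists u.
Qed.

Lemma dyck_commute_enclose u v :
  dyck u -> dyck v -> commute_mod S (w u) (w v) ->
  commute_mod S (w (enclose u)) (w (enclose v)).
Proof.
move=> du dv uv.
have enclose_mul x y :
    w (enclose x) * w (enclose y) = w [:: Rt] * (w x * LR * w y) * w [:: Lt].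
  by rewrite !w_enclose (w_cat [:: Lt] [:: Rt]) !mulrA.
rewrite /commute_mod !enclose_mul; apply: congr_modM (congr_mod_refl _ _).
apply: congr_modM (congr_mod_refl _ _) _.
exact: congr_mod_mul3_rev (dyck_commute_LR du) (dyck_commute_LR dv) uv.
Qed.

Lemma dyck_commute x y : dyck x -> dyck y -> commute_mod S (w x) (w y).
Proof.
move=> dx; elim: dx y => [|u u' du IHu _ IHu'] y dy.
  by rewrite w_nil; apply: commute_mod1l.
rewrite w_cat; apply: commute_modMl (IHu' y dy).
elim: dy => [|v v' dv _ _ IHv'].
  by rewrite w_nil; apply/commute_mod_sym/commute_mod1l.
rewrite w_cat; apply: commute_modMr IHv'.
exact: dyck_commute_enclose (IHu v dv).
Qed.

End DyckCommutation.

Theorem lemma5p1 (P Q : word) :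
  upper_prime P -> upper_prime Q ->
  in_twosided_ideal gen_set (wrd P * wrd Q - wrd Q * wrd P).
Proof.
move=> /upper_primeP[u du ->] /upper_primeP[v dv ->].
have gen_wrd U : upper_prime U ->
    gen_set (wrd U * wrd [:: Lt; Rt] - wrd [:: Lt; Rt] * wrd U).
  by move=> hU; exists U.
exact: (dyck_commute wrd_nil wrd_cat gen_wrd)
  (dyck_enclose du) (dyck_enclose dv).
Qed.
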